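(* Let $\vec H$ be a directed graph on $k$ vertices with $\chi(\vec H)\le p$, and let $0<\delta<\frac1{8k}$. There exists $n_0$, depending only on $\vec H$ (and $\delta$), such that for every $n>n_0$ the following holds. Let $G$ be a $p$-partite graph on $n$ vertices with parts $V_1,\dots,V_p$, each of size at least $10^k\delta n$, let $\vec G$ be a relevant orientation of $G$ (with respect to this partition and $\delta$), and let $c:V(\vec H)\to[p]$ be a proper colouring of $\vec H$. Then there is an embedding of $\vec H$ into $\vec G$ (as a directed subgraph) such that each vertex $v$ of $\vec H$ is mapped into $V_{c(v)}$.
   Context: $\chi(\vec H)$ is the chromatic number of the underlying graph of $\vec H$; a proper colouring of $\vec H$ is one of its underlying graph. Given a partition $V(G)=V_1\cup\dots\cup V_p$ and $\delta>0$, an orientation $\vec G$ of $G$ is relevant if for every $i\neq j$ and all $X_1\subseteq V_i$, $X_2\subseteq V_j$ with $|X_1|,|X_2|>2\delta n$, there are at least $|X_1||X_2|/10$ edges of $\vec G$ directed from $X_1$ to $X_2$. *)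

From HB Require Import structures.
From mathcomp Require Import all_boot all_order all_algebra.
From mathcomp Require Import reals.
Set Implicit Arguments. Unset Strict Implicit. Unset Printing Implicit Defensive.
Import Order.TTheory GRing.Theory Num.Theory.
Local Open Scope ring_scope.

(* A directed graph on vertex set 'I_k is an arc relation a : rel 'I_k.
   It is an oriented graph (no loops, no pair of opposite arcs). *)
Definition oriented {T : finType} (a : rel T) : Prop :=
  forall x y, a x y -> ~~ a y x.

Definition proper_colouring {T : finType} (a : rel T) (p : nat) (c : T -> 'I_p) : Prop :=
  forall u v, a u v || a v u -> c u != c v.

Definition chi_le {T : finType} (a : rel T) (p : nat) : Prop :=
  exists c : T -> 'I_p, proper_colouring a c.

(* g is an orientation of a p-partite graph whose parts are V_i = part^{-1}(i):
   no loops/opposite arcs and every arc joins two different parts. *)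
Definition partite_orientation {n p : nat} (part : 'I_n -> 'I_p) (g : rel 'I_n) : Prop :=
  oriented g /\ forall x y, g x y -> part x != part y.

Definition n_arcs {n : nat} (g : rel 'I_n) (X1 X2 : {set 'I_n}) : nat :=
  #|[set xy : 'I_n * 'I_n | [&& xy.1 \in X1, xy.2 \in X2 & g xy.1 xy.2]]|.

Definition relevant {R : realType} {n p : nat} (part : 'I_n -> 'I_p) (delta : R)
    (g : rel 'I_n) : Prop :=
  forall (i j : 'I_p) (X1 X2 : {set 'I_n}), i != j ->
    (forall x, x \in X1 -> part x = i) ->
    (forall x, x \in X2 -> part x = j) ->
    2 * delta * n%:R < #|X1|%:R ->
    2 * delta * n%:R < #|X2|%:R ->
    ((#|X1| * #|X2|)%:R / 10 <= (n_arcs g X1 X2)%:R :> R).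

Definition embedding {k n : nat} (a : rel 'I_k) (g : rel 'I_n) (f : 'I_k -> 'I_n) : Prop :=
  injective f /\ forall u v, a u v -> g (f u) (f v).

(* Embed the vertices of H greedily in the order 0, ..., k-1.  After m steps every
   remaining vertex u keeps a candidate set C u inside the part V_(c u), of size at least
   10^(k-m) δn, whose vertices are all compatible with the images of the embedded
   neighbours of u.  Relevance implies that, for each later neighbour u of the next
   vertex v, at most 2δn vertices of C v see fewer than a tenth of C u in the required
   direction.  As δn > k/10, some vertex of C v avoids these bad vertices and the at most
   k used ones; mapping v to it shrinks every C u by a factor at most 10. *)

From HB Require Import structures.
From mathcomp Require Import all_boot all_order all_algebra.
From mathcomp Require Import reals.
From mathcomp Require Import zify lra.
Set Implicit Arguments. Unset Strict Implicit. Unset Printing Implicit Defensive.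
Import Order.TTheory GRing.Theory Num.Theory.

Lemma card_bigcup_le (I T : finType) (P : pred I) (F : I -> {set T}) :
  (#|\bigcup_(i | P i) F i| <= \sum_(i | P i) #|F i|)%N.
Proof.
apply: (big_ind2 (fun (A : {set T}) m => #|A| <= m)%N) => [|A a B b hA hB|//].
  by rewrite cards0.
by rewrite (leq_trans (leq_card_setU A B).1) ?leq_add.
Qed.

Lemma card_ord_gt k m : (#|[set u : 'I_k | m < u]| <= k - m.+1)%N.
Proof.
rewrite cardE -(size_map val) -(size_iota m.+1 (k - m.+1)).
apply: uniq_leq_size => [|x /mapP[u]]; first by rewrite (map_inj_uniq val_inj) enum_uniq.
rewrite mem_enum inE => mu ->; rewrite mem_iota mu /=; have := ltn_ord u; lia.
Qed.

Lemma leq_pow10 a : (10 + 2 * a <= 10 ^ a.+1)%N.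
Proof. by elim: a => [//|a IH]; rewrite expnS; lia. Qed.

Lemma n_arcs_sum n (r : rel 'I_n) X Y :
  n_arcs r X Y = (\sum_(x in X) \sum_(y in Y) r x y)%N.
Proof.
rewrite /n_arcs -sum1_card pair_big /= [LHS]big_mkcond [RHS]big_mkcond.
apply: eq_bigr => -[x y] _ /=; rewrite inE /=.
by case: (x \in X); case: (y \in Y); case: (r x y).
Qed.

Lemma n_arcsE n (r : rel 'I_n) X Y :
  n_arcs r X Y = (\sum_(x in X) #|[set y in Y | r x y]|)%N.
Proof.
rewrite n_arcs_sum; apply: eq_bigr => x _.
rewrite -sum1_card [RHS](eq_bigl (fun y => (y \in Y) && r x y)) => [|y].
  by rewrite big_mkcondr; apply: eq_bigr => y _; case: (r x y).
by rewrite inE.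
Qed.

Lemma n_arcs_transpose n (r : rel 'I_n) X Y :
  n_arcs r X Y = n_arcs [rel x y | r y x] Y X.
Proof. by rewrite !n_arcs_sum exchange_big. Qed.

Definition low_degree n (r : rel 'I_n) (X Y : {set 'I_n}) : {set 'I_n} :=
  [set x in X | (10 * #|[set y in Y | r x y]| < #|Y|)%N].

(* [compatible H G w u a b]: the images [a] of [w] and [b] of [u] realise the arcs
   of [H] between [w] and [u]. *)
Definition compatible k n (H : rel 'I_k) (G : rel 'I_n) (w u : 'I_k) : rel 'I_n :=
  fun a b => if H w u then G a b else if H u w then G b a else true.

Lemma compatible_arc k n (H : rel 'I_k) (G : rel 'I_n) w u a b :
  oriented H -> compatible H G w u a b -> (H w u -> G a b) /\ (H u w -> G b a).
Proof.
rewrite /compatible => oH; case: ifP => [Hwu Gab | _]; last by case: ifP.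
by split=> // Huw; move: (oH _ _ Hwu); rewrite Huw.
Qed.

Local Open Scope ring_scope.

Lemma card_low_degree (R : realType) n (r : rel 'I_n) (X Y : {set 'I_n}) (d : R) :
  0 <= d ->
  (forall B : {set 'I_n}, B \subset X -> 2 * d < #|B|%:R ->
     (#|B| * #|Y|)%:R / 10 <= (n_arcs r B Y)%:R :> R) ->
  #|low_degree r X Y|%:R <= 2 * d.
Proof.
move=> d_ge0 dense; set B := low_degree r X Y; rewrite leNgt; apply/negP => B_big.
have B_gt0 : (0 < #|B|)%N by rewrite -(ltr0n R); apply: le_lt_trans B_big; lra.
have arcs_small : (10 * n_arcs r B Y + #|B| <= #|B| * #|Y|)%N.
  rewrite n_arcsE big_distrr -[X in (_ + X <= _)%N]sum1_card -big_split /=.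
  by rewrite -sum_nat_const; apply: leq_sum => x; rewrite inE addn1 => /andP[].
have B_sub : B \subset X by apply/subsetP => y; rewrite inE => /andP[].
have := dense B B_sub B_big; move: arcs_small.
by rewrite -(ler_nat R) natrD !natrM; lra.
Qed.

Lemma relevant_compatible (R : realType) k n p (H : rel 'I_k) (G : rel 'I_n)
    (part : 'I_n -> 'I_p) (c : 'I_k -> 'I_p) (delta : R) (w u : 'I_k)
    (X Y : {set 'I_n}) :
  relevant part delta G -> proper_colouring H c ->
  (forall x, x \in X -> part x = c w) -> (forall y, y \in Y -> part y = c u) ->
  2 * (delta * n%:R) < #|Y|%:R ->
  forall B : {set 'I_n}, B \subset X -> 2 * (delta * n%:R) < #|B|%:R ->
  (#|B| * #|Y|)%:R / 10 <= (n_arcs (compatible H G w u) B Y)%:R :> R.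
Proof.
move=> rel c_proper X_part Y_part Y_big B B_sub B_big.
have B_part x : x \in B -> part x = c w by move/(subsetP B_sub)/X_part.
rewrite /compatible; case Hwu: (H w u).
  apply: (rel (c w) (c u)); rewrite -?mulrA //.
  by apply: c_proper; rewrite Hwu.
case Huw: (H u w).
  rewrite n_arcs_transpose mulnC; apply: (rel (c u) (c w)); rewrite -?mulrA //.
  by apply: c_proper; rewrite Huw.
rewrite n_arcsE (eq_bigr (fun _ => #|Y|)) => [|x _]; last first.
  by apply: eq_card => y; rewrite inE andbT.
rewrite sum_nat_const mulnC; have : (0 : R) <= (#|B| * #|Y|)%:R by []; lra.
Qed.

Section GreedyEmbedding.

Variables (R : realType) (k n p : nat) (H : rel 'I_k) (G : rel 'I_n).
Variables (part : 'I_n -> 'I_p) (c : 'I_k -> 'I_p) (delta : R).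
Hypotheses (H_oriented : oriented H) (c_proper : proper_colouring H c).
Hypothesis G_relevant : relevant part delta G.

Local Notation d := (delta * n%:R).

Hypotheses (d_gt0 : 0 < d) (k_lt_10d : k%:R < 10 * d).

Record partial_embedding (m : nat) (f : 'I_k -> 'I_n) (C : 'I_k -> {set 'I_n}) :
    Prop := {
  embedded_inj : forall u w : 'I_k, (u < m)%N -> (w < m)%N -> f u = f w -> u = w;
  embedded_part : forall u : 'I_k, (u < m)%N -> part (f u) = c u;
  embedded_arc : forall u w : 'I_k, (u < m)%N -> (w < m)%N -> H u w -> G (f u) (f w);
  candidate_part : forall u : 'I_k, (m <= u)%N -> forall y, y \in C u -> part y = c u;
  candidate_compatible : forall u w : 'I_k, (m <= u)%N -> (w < m)%N ->
    forall y, y \in C u -> compatible H G w u (f w) y;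
  candidate_size : forall u : 'I_k, (m <= u)%N -> 10 ^+ (k - m) * d <= #|C u|%:R }.

Lemma ler_pow10 a : 10 + 2 * a%:R <= 10 ^+ a.+1 :> R.
Proof. by have := leq_pow10 a; rewrite -(ler_nat R) natrX natrD natrM. Qed.

Lemma candidate_large m f C (u : 'I_k) :
  partial_embedding m f C -> (m <= u)%N -> 2 * d < #|C u|%:R.
Proof.
move=> emb mu; apply: lt_le_trans (candidate_size emb mu).
have -> : (k - m = (k - m.+1).+1)%N by have := ltn_ord u; lia.
rewrite ltr_pM2r //; have := ler_pow10 (k - m.+1).
have : 0 <= (k - m.+1)%N%:R :> R by []; lra.
Qed.

Lemma card_low_candidate m f C (v u : 'I_k) :
  partial_embedding m f C -> (m <= v)%N -> (m <= u)%N ->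
  #|low_degree (compatible H G v u) (C v) (C u)|%:R <= 2 * d.
Proof.
move=> emb mv mu; apply: card_low_degree; first exact: ltW.
exact: relevant_compatible (candidate_part emb mv) (candidate_part emb mu)
  (candidate_large emb mu).
Qed.

Lemma exists_good_candidate (v : 'I_k) f C :
  partial_embedding v f C ->
  exists x, [/\ x \in C v, x \notin f @: [set: 'I_k] &
    forall u : 'I_k, (v < u)%N ->
      x \notin low_degree (compatible H G v u) (C v) (C u)].
Proof.
move=> emb; pose L := [set u : 'I_k | (v < u)%N].
pose low u := low_degree (compatible H G v u) (C v) (C u).
pose bad := (f @: [set: 'I_k]) :|: \bigcup_(u in L) low u.
have card_bad : (#|bad| <= k + \sum_(u in L) #|low u|)%N.
  apply: leq_trans (leq_card_setU _ _).1 (leq_add _ (card_bigcup_le _ _)).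
  by apply: leq_trans (leq_imset_card _ _) _; rewrite cardsT card_ord.
have sum_low : (\sum_(u in L) #|low u|)%:R <= 2 * d * (k - v.+1)%N%:R.
  rewrite natr_sum; apply: le_trans (_ : \sum_(u in L) 2 * d <= _).
    by apply: ler_sum => u; rewrite inE => vu; apply: card_low_candidate emb _ (ltnW vu).
  rewrite sumr_const -[_ *+ #|L|]mulr_natr ler_wpM2l ?ler_nat ?card_ord_gt //.
  by have := d_gt0; lra.
have C_big : 10 ^+ (k - v.+1).+1 * d <= #|C v|%:R.
  have -> : (k - v.+1).+1 = (k - v)%N by have := ltn_ord v; lia.
  exact: (candidate_size emb (leqnn v)).
have /subsetPn[x x_Cv x_good] : ~~ (C v \subset bad).
  (* |bad| <= k + 2d a < (10 + 2a) d <= 10^(a+1) d <= |C v|, with a = k - v - 1 *)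
  apply/negP => /subset_leq_card; rewrite -(ler_nat R) => C_small.
  have pow_d := ler_wpM2r (ltW d_gt0) (ler_pow10 (k - v.+1)).
  move: card_bad; rewrite -(ler_nat R) natrD => card_bad.
  have := k_lt_10d; nra.
exists x; split=> [//||u vu]; apply: contra x_good => x_bad; rewrite inE.
  by rewrite x_bad.
by apply/orP; right; apply/bigcupP; exists u => //; rewrite inE.
Qed.

Lemma extend_partial_embedding (v : 'I_k) f C x :
  partial_embedding v f C -> x \in C v -> x \notin f @: [set: 'I_k] ->
  (forall u : 'I_k, (v < u)%N ->
     x \notin low_degree (compatible H G v u) (C v) (C u)) ->
  partial_embedding v.+1 (fun w => if w == v then x else f w)
    (fun u => [set y in C u | compatible H G v u x y]).
Proof.
move=> emb x_Cv x_new x_good.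
have lt_vS (w : 'I_k) : (w < v.+1)%N -> w = v \/ (w < v)%N.
  by rewrite ltnS leq_eqVlt => /orP[/eqP/val_inj|]; [left | right].
have lt_v_neq (w : 'I_k) : (w < v)%N -> (w == v) = false.
  by move=> wv; apply/negbTE; apply: contraTneq wv => ->; rewrite ltnn.
have f_neq_x w : f w != x by apply: contraNneq x_new => <-; rewrite imset_f.
have compatible_v (w : 'I_k) : (w < v)%N ->
    (H w v -> G (f w) x) /\ (H v w -> G x (f w)).
  by move=> wv; apply: compatible_arc (candidate_compatible emb (leqnn v) wv x_Cv).
split.
- move=> u w /lt_vS[->|uv] /lt_vS[->|wv]; rewrite ?eqxx ?lt_v_neq //.
  + by move/esym/eqP; rewrite (negbTE (f_neq_x w)).
  + by move/eqP; rewrite (negbTE (f_neq_x u)).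
  + exact: (embedded_inj emb uv wv).
- move=> u /lt_vS[->|uv]; rewrite ?eqxx ?lt_v_neq //.
  + exact: (candidate_part emb (leqnn v) x_Cv).
  + exact: (embedded_part emb uv).
- move=> u w /lt_vS[->|uv] /lt_vS[->|wv]; rewrite ?eqxx ?lt_v_neq //.
  + by move=> Hvv; move: (H_oriented Hvv); rewrite Hvv.
  + by case: (compatible_v w wv) => _.
  + by case: (compatible_v u uv).
  + exact: (embedded_arc emb uv wv).
- move=> u vu y; rewrite inE => /andP[y_Cu _].
  exact: (candidate_part emb (ltnW vu) y_Cu).
- move=> u w vu /lt_vS[->|wv] y; rewrite inE => /andP[y_Cu y_compat].
    by rewrite eqxx.
  by rewrite lt_v_neq //; exact: (candidate_compatible emb (ltnW vu) wv y_Cu).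
- move=> u vu; have := candidate_size emb (ltnW vu).
  have -> : (k - v = (k - v.+1).+1)%N by have := ltn_ord u; lia.
  have := x_good u vu; rewrite inE x_Cv /= -leqNgt -(ler_nat R) natrM exprS.
  have := d_gt0; nra.
Qed.

Lemma greedy_embedding :
  (forall i : 'I_p, 10 ^+ k * delta * n%:R <= #|[set x | part x == i]|%:R) ->
  exists f, embedding H G f /\ forall v, part (f v) = c v.
Proof.
move=> parts_large.
have n_gt0 : (0 < n)%N.
  by rewrite lt0n; apply: contraTneq d_gt0 => ->; rewrite mulr0 ltxx.
have partial m : (m <= k)%N -> exists f C, partial_embedding m f C.
  elim: m => [_ | m IH mk].
    exists (fun _ => Ordinal n_gt0), (fun u => [set x | part x == c u]).
    by split=> // u _ => [y /[!inE] /eqP | ]; rewrite ?subn0 ?mulrA.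
  have [f [C emb]] := IH (ltnW mk).
  have [x [x_Cv x_new x_good]] := exists_good_candidate (v := Ordinal mk) emb.
  do 2 eexists.
  exact: (extend_partial_embedding (v := Ordinal mk) emb x_Cv x_new x_good).
have [f [C emb]] := partial k (leqnn k).
exists f; split; first split.
- by move=> u w; apply: (embedded_inj emb).
- by move=> u w; apply: (embedded_arc emb).
- by move=> u; apply: (embedded_part emb).
Qed.

End GreedyEmbedding.

Theorem mainTheorem10 (R : realType) (k p : nat) (H : rel 'I_k) (delta : R) :
  oriented H -> chi_le H p ->
  0 < delta -> delta < (8 * k%:R)^-1 ->
  exists n0 : nat, forall n : nat, (n0 < n)%N ->
  forall (part : 'I_n -> 'I_p) (G : rel 'I_n),
    (forall i : 'I_p, 10 ^+ k * delta * n%:R <= #|[set x | part x == i]|%:R) ->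
    partite_orientation part G ->
    relevant part delta G ->
  forall c : 'I_k -> 'I_p, proper_colouring H c ->
  exists f : 'I_k -> 'I_n, embedding H G f /\ forall v, part (f v) = c v.
Proof.
move=> H_oriented _ delta_gt0 _.
have bound_ge0 : 0 <= k%:R / (10 * delta) by rewrite divr_ge0 // mulr_ge0 // ltW.
exists (Num.bound (k%:R / (10 * delta))).
move=> n n_large part G parts_large _ G_relevant c c_proper.
have n_gt_bound : k%:R / (10 * delta) < n%:R.
  by apply: lt_trans (archi_boundP bound_ge0) _; rewrite ltr_nat.
apply: (greedy_embedding H_oriented c_proper G_relevant _ _ parts_large).
  by rewrite mulr_gt0 // ltr0n (leq_ltn_trans (leq0n _) n_large).
by rewrite mulrA mulrC -ltr_pdivrMr ?mulr_gt0.
Qed.
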